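(* Let $(M,g)$ be an $n$-dimensional Lorentzian manifold with Levi-Civita connection $\nabla$, let $u$ be a unit timelike vector field ($u_pu^p=-1$), and let $A,B$ be smooth scalar fields with $B\neq 0$. The perfect fluid tensor $K_{jk}=Ag_{jk}+Bu_ju_k$ is a conformal Killing tensor if and only if (1) the velocity $u$ is shear-free ($\sigma_{ij}=0$), and (2) $H=\dfrac{\dot B}{2B}$ and $\nabla_jB=-\dot B\,u_j+2B\,\dot u_j$. In that case the conformal vector of $K$ is $\eta_j=\nabla_jA+\dot B\,u_j$, and the scalar field $A$ is unconstrained.
   Context: A symmetric tensor $K_{ij}$ on an $n$-dimensional pseudo-Riemannian manifold is a conformal Killing tensor (CKT) if $\nabla_iK_{jl}+\nabla_jK_{li}+\nabla_lK_{ij}=\eta_ig_{jl}+\eta_jg_{li}+\eta_lg_{ij}$ for some covector $\eta_i$; necessarily $\eta_i=\frac{\nabla_iK+2\nabla_jK^j{}_i}{n+2}$ with $K=g^{ij}K_{ij}$, and $\eta_i$ is called the conformal vector. For a scalar $f$, $\dot f=u^k\nabla_kf$; the acceleration is $\dot u_j=u^k\nabla_ku_j$. Every unit timelike vector field has the canonical decomposition $\nabla_iu_j=H(g_{ij}+u_iu_j)-u_i\dot u_j+\omega_{ij}+\sigma_{ij}$, where $H=\frac{1}{n-1}\nabla_ru^r$ is the expansion, $\omega_{ij}=-\omega_{ji}$ the vorticity, $\sigma_{ij}=\sigma_{ji}$ the shear, with $g^{ij}\sigma_{ij}=0$ and $\omega_{ij}u^j=\sigma_{ij}u^j=0$. 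*)

(* Local (coordinate chart) formalization
   of tensor calculus on a Lorentzian manifold. *)
From HB Require Import structures.
From mathcomp Require Import all_boot all_order all_algebra.
From mathcomp Require Import all_classical all_reals all_analysis.
Set Implicit Arguments. Unset Strict Implicit. Unset Printing Implicit Defensive.
Import Order.TTheory GRing.Theory Num.Theory.
Import numFieldNormedType.Exports.
Local Open Scope ring_scope.
Local Open Scope classical_set_scope.

Section Tensors.
Variables (R : realType) (n : nat).
Local Notation V := 'rV[R]_n.

Definition pd (i : 'I_n) (f : V -> R) : V -> R :=
  fun x => 'D_(delta_mx 0 i) f x.

Fixpoint pds (s : seq 'I_n) (f : V -> R) : V -> R :=
  if s is i :: s' then pd i (pds s' f) else f.

Definition smooth_on (U : set V) (f : V -> R) : Prop :=
  forall (s : seq 'I_n) (x : V), U x -> differentiable (pds s f) x.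

Definition lorentzian (G : 'M[R]_n) : Prop :=
  G^T = G /\
  exists P : 'M[R]_n, P \in unitmx /\
    P^T *m G *m P = diag_mx (\row_(i < n) (if val i == 0%N then -1 else 1)).

Variable g : V -> 'M[R]_n.

Definition ginv (x : V) : 'M[R]_n := invmx (g x).

Definition Gam (k i j : 'I_n) (x : V) : R :=
  2^-1 * \sum_(l < n) ginv x k l *
    (pd i (fun y => g y j l) x + pd j (fun y => g y i l) x
     - pd l (fun y => g y i j) x).

Definition cov1 (w : V -> 'I_n -> R) (i j : 'I_n) (x : V) : R :=
  pd i (fun y => w y j) x - \sum_(k < n) Gam k i j x * w x k.

Definition cov2 (T : V -> 'I_n -> 'I_n -> R) (i j l : 'I_n) (x : V) : R :=
  pd i (fun y => T y j l) x
  - \sum_(k < n) Gam k i j x * T x k l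
  - \sum_(k < n) Gam k i l x * T x j k.

Definition CKT_eq (U : set V) (K : V -> 'I_n -> 'I_n -> R)
  (eta : V -> 'I_n -> R) : Prop :=
  forall x, U x -> forall i j l : 'I_n,
    cov2 K i j l x + cov2 K j l i x + cov2 K l i j x
    = eta x i * g x j l + eta x j * g x l i + eta x l * g x i j.

Definition is_CKT (U : set V) (K : V -> 'I_n -> 'I_n -> R) : Prop :=
  exists eta, CKT_eq U K eta.

Variable u : V -> 'I_n -> R.   (* vector field components u^i *)

Definition lower (x : V) (j : 'I_n) : R := \sum_(k < n) g x j k * u x k.

Definition dotf (f : V -> R) (x : V) : R := \sum_(k < n) u x k * pd k f x.

Definition accel (x : V) (j : 'I_n) : R :=
  \sum_(k < n) u x k * cov1 lower k j x.

Definition expansion (x : V) : R :=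
  (n.-1)%:R^-1 * \sum_(i < n) \sum_(j < n) ginv x i j * cov1 lower i j x.

(* shear: symmetric trace-free part of the canonical decomposition,
   sigma_ij = nabla_(i u_j) - H (g_ij + u_i u_j) + u_(i udot_j) *)
Definition shear (x : V) (i j : 'I_n) : R :=
  2^-1 * (cov1 lower i j x + cov1 lower j i x)
  - expansion x * (g x i j + lower x i * lower x j)
  + 2^-1 * (lower x i * accel x j + lower x j * accel x i).

Definition shear_free (U : set V) : Prop :=
  forall x, U x -> forall i j, shear x i j = 0.

Definition cond2 (U : set V) (B : V -> R) : Prop :=
  forall x, U x ->
    expansion x = dotf B x / (2 * B x) /\
    forall j, pd j B x = - dotf B x * lower x j + 2 * B x * accel x j.

Definition perfect_fluid (A B : V -> R) (x : V) (j k : 'I_n) : R :=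
  A x * g x j k + B x * lower x j * lower x k.

End Tensors.

(* Expanding ∇K for K = A g + B u⊗u with ∇g = 0 writes the CKT defect
   ∇_(i K_jl) - η_(i g_jl) as the symmetrisation of p_i u_j u_l + S_ij u_l - r_l g_ij,
   where p and r are the residuals of ∇B = -Ḃ u + 2B u̇ and of η = ∇A + Ḃ u, and
   S = 2Bσ - (Ḃ - 2BH)(g + u⊗u). Differentiating u^j u_j = -1 gives u^j ∇_i u_j = 0, so
   p and S are orthogonal to u; contractions with u and with g^-1 then show that the
   symmetrised tensor vanishes only if p, r and S do. Finally σ is trace-free, so the
   trace of S = 0 gives Ḃ = 2BH, and then σ = 0. *)

From HB Require Import structures.
From mathcomp Require Import all_boot all_order all_algebra.
From mathcomp Require Import all_classical all_reals all_analysis.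
From mathcomp Require Import ring lra.
Import Order.TTheory GRing.Theory Num.Theory.
Import numFieldNormedType.Exports.
Local Open Scope ring_scope.
Local Open Scope classical_set_scope.

Set Implicit Arguments. Unset Strict Implicit. Unset Printing Implicit Defensive.

Definition cycsum (I : Type) (V : zmodType) (F : I -> I -> I -> V) i j l :=
  F i j l + F j l i + F l i j.

Section MetricAlgebra.
Variables (R : realFieldType) (n : nat) (G Gi : 'M[R]_n).
Hypotheses (trG : G^T = G) (trGi : Gi^T = Gi) (mulGiG : Gi *m G = 1%:M).

Lemma metric_sym i j : G i j = G j i.
Proof. by rewrite -[in LHS]trG mxE. Qed.

Lemma inv_metric_sym i j : Gi i j = Gi j i.
Proof. by rewrite -[in LHS]trGi mxE. Qed.

Lemma sum_inv_metric i j : \sum_(k < n) Gi i k * G k j = (i == j)%:R.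
Proof. by have /matrixP/(_ i j) := mulGiG; rewrite !mxE. Qed.

Lemma sum_mul_delta (F : 'I_n -> R) i : \sum_(j < n) F j * (j == i)%:R = F i.
Proof.
rewrite (bigD1 i) //= eqxx mulr1 big1 ?addr0 // => j /negbTE ->.
by rewrite mulr0.
Qed.

Lemma lower_raise (Q : 'I_n -> R) l :
  \sum_(k < n) (\sum_(m < n) Gi k m * Q m) * G k l = Q l.
Proof.
under eq_bigr do rewrite mulr_suml.
rewrite exchange_big /= -[RHS]sum_mul_delta; apply: eq_bigr => m _.
rewrite -sum_inv_metric mulr_sumr; apply: eq_bigr => k _.
by rewrite inv_metric_sym; ring.
Qed.

Lemma trace_metric : \sum_(j < n) \sum_(l < n) Gi j l * G j l = n%:R.
Proof.
under eq_bigr do (under eq_bigr do rewrite metric_sym; rewrite sum_inv_metric eqxx).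
by rewrite sumr_const card_ord.
Qed.

Lemma contract_metric_l (X : 'I_n -> R) i :
  \sum_(j < n) \sum_(l < n) Gi j l * (X l * G i j) = X i.
Proof.
rewrite -[RHS](lower_raise X i); apply: eq_bigr => j _.
by rewrite mulr_suml; apply: eq_bigr => l _; rewrite metric_sym; ring.
Qed.

Lemma contract_metric_r (X : 'I_n -> R) i :
  \sum_(j < n) \sum_(l < n) Gi j l * (X j * G l i) = X i.
Proof.
rewrite -[RHS](lower_raise X i) exchange_big /=; apply: eq_bigr => l _.
by rewrite mulr_suml; apply: eq_bigr => j _; rewrite inv_metric_sym; ring.
Qed.

Section UnitVector.
Variables (u L : 'I_n -> R).
Hypotheses (lowerE : forall j, L j = \sum_(k < n) G j k * u k)
  (normL : \sum_(j < n) u j * L j = -1).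

Lemma sum_u_metric j : \sum_(l < n) u l * G j l = L j.
Proof. by rewrite lowerE; apply: eq_bigr => l _; rewrite mulrC. Qed.

Lemma raise_lower j : \sum_(l < n) Gi j l * L l = u j.
Proof.
under eq_bigr do rewrite lowerE mulr_sumr.
rewrite exchange_big /= -[RHS]sum_mul_delta; apply: eq_bigr => k _.
rewrite eq_sym -sum_inv_metric mulr_sumr; apply: eq_bigr => l _; ring.
Qed.

Lemma contract_lower_l (X : 'I_n -> R) :
  \sum_(j < n) \sum_(l < n) Gi j l * (X j * L l) = \sum_(j < n) u j * X j.
Proof.
apply: eq_bigr => j _; rewrite -raise_lower mulr_suml.
by apply: eq_bigr => l _; ring.
Qed.

Lemma contract_lower_r (X : 'I_n -> R) :
  \sum_(j < n) \sum_(l < n) Gi j l * (L j * X l) = \sum_(l < n) u l * X l.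
Proof.
rewrite exchange_big /=; apply: eq_bigr => l _; rewrite -raise_lower mulr_suml.
by apply: eq_bigr => j _; rewrite inv_metric_sym; ring.
Qed.

Definition hproj i j := G i j + L i * L j.

Lemma hproj_sym i j : hproj i j = hproj j i.
Proof. by rewrite /hproj metric_sym mulrC. Qed.

Lemma hproj_u i : \sum_(l < n) u l * hproj i l = 0.
Proof.
rewrite /hproj; under eq_bigr do rewrite mulrDr mulrCA.
by rewrite big_split /= sum_u_metric -mulr_sumr normL; ring.
Qed.

Lemma trace_hproj : \sum_(j < n) \sum_(l < n) Gi j l * hproj j l = n%:R - 1.
Proof.
rewrite (eq_bigr (fun j => \sum_(l < n) Gi j l * G j l
                          + \sum_(l < n) Gi j l * (L j * L l))); last first.
  by move=> j _; rewrite -big_split; apply: eq_bigr => l _; rewrite mulrDr.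
by rewrite big_split /= trace_metric contract_lower_l normL.
Qed.

Lemma tracefree_eq_hproj (sig : 'I_n -> 'I_n -> R) (c e : R) :
  (1 < n)%N -> c != 0 -> \sum_(j < n) \sum_(l < n) Gi j l * sig j l = 0 ->
  (forall i j, c * sig i j = e * hproj i j) -> e = 0 /\ forall i j, sig i j = 0.
Proof.
move=> n_gt1 c_neq0 trsig csig.
have e0 : e = 0.
  have : \sum_(j < n) \sum_(l < n) Gi j l * (c * sig j l) = e * (n%:R - 1).
    rewrite -trace_hproj mulr_sumr; apply: eq_bigr => j _.
    by rewrite mulr_sumr; apply: eq_bigr => l _; rewrite csig; ring.
  rewrite (eq_bigr (fun j => c * \sum_(l < n) Gi j l * sig j l)); last first.
    by move=> j _; rewrite mulr_sumr; apply: eq_bigr => l _; ring.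
  have n1_neq0 : n%:R - 1 != 0 :> R by rewrite subr_eq0 pnatr_eq1 gtn_eqF.
  rewrite -mulr_sumr trsig mulr0 => /esym/eqP.
  by rewrite mulf_eq0 (negbTE n1_neq0) orbF => /eqP.
split=> // i j; apply/eqP.
by rewrite -(mulrI_eq0 _ (lregP c_neq0)) csig e0 mul0r.
Qed.

(* The acceleration, expansion and shear of u computed from an arbitrary tensor W
   in place of ∇_i u_j; with W = ∇u they are [accel], [expansion] and [shear]. *)
Definition accel_of (W : 'I_n -> 'I_n -> R) j := \sum_(k < n) u k * W k j.

Definition expansion_of (W : 'I_n -> 'I_n -> R) :=
  (n.-1)%:R^-1 * \sum_(i < n) \sum_(j < n) Gi i j * W i j.

Definition shear_of (W : 'I_n -> 'I_n -> R) i j :=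
  2^-1 * (W i j + W j i) - expansion_of W * hproj i j
  + 2^-1 * (L i * accel_of W j + L j * accel_of W i).

Lemma shear_of_sym W i j : shear_of W i j = shear_of W j i.
Proof. by rewrite /shear_of hproj_sym; ring. Qed.

Section Kinematics.
Variable W : 'I_n -> 'I_n -> R.
Hypothesis Wu : forall i, \sum_(j < n) u j * W i j = 0.

Lemma accel_of_u : \sum_(j < n) u j * accel_of W j = 0.
Proof.
rewrite /accel_of; under eq_bigr do rewrite mulr_sumr.
rewrite exchange_big /= big1 // => k _; under eq_bigr do rewrite mulrCA.
by rewrite -mulr_sumr Wu mulr0.
Qed.

Lemma shear_of_u i : \sum_(l < n) u l * shear_of W i l = 0.
Proof.
rewrite (eq_bigr (fun l => 2^-1 * (u l * W i l) + 2^-1 * (u l * W l i)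
  + (- expansion_of W) * (u l * hproj i l)
  + (2^-1 * L i) * (u l * accel_of W l) + (2^-1 * accel_of W i) * (u l * L l))).
  rewrite !big_split /= -!mulr_sumr Wu hproj_u accel_of_u normL.
  by rewrite -/(accel_of W i); ring.
by move=> l _; rewrite /shear_of; ring.
Qed.

Lemma shear_of_tracefree : (1 < n)%N ->
  \sum_(i < n) \sum_(j < n) Gi i j * shear_of W i j = 0.
Proof.
move=> n_gt1.
have predn_neq0 : (n.-1)%:R != 0 :> R by rewrite pnatr_eq0 -lt0n ltn_predRL.
have predn_sub1 : (n.-1)%:R = n%:R - 1 :> R by rewrite -subn1 natrB // ltnW.
have trWT : \sum_(i < n) \sum_(j < n) Gi i j * W j i =
            \sum_(i < n) \sum_(j < n) Gi i j * W i j.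
  rewrite exchange_big /=; apply: eq_bigr => i _; apply: eq_bigr => j _.
  by rewrite inv_metric_sym.
rewrite (eq_bigr (fun i => \sum_(j < n) (2^-1 * (Gi i j * W i j) + 2^-1 * (Gi i j * W j i)
  + (- expansion_of W) * (Gi i j * hproj i j)
  + 2^-1 * (Gi i j * (L i * accel_of W j)) + 2^-1 * (Gi i j * (accel_of W i * L j)))));
  last by move=> i _; apply: eq_bigr => j _; rewrite /shear_of; ring.
under eq_bigr do rewrite !big_split /= -!mulr_sumr.
rewrite !big_split /= -!mulr_sumr trWT trace_hproj contract_lower_l contract_lower_r.
by rewrite accel_of_u /expansion_of -predn_sub1; field.
Qed.

End Kinematics.

Definition fluid_defect (p r : 'I_n -> R) (S : 'I_n -> 'I_n -> R) i j l :=
  p i * L j * L l + S i j * L l - r l * G i j.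

Lemma fluid_ckt_defectE (dA dB eta : 'I_n -> R) (W : 'I_n -> 'I_n -> R) (beta bdot : R) i j l :
  cycsum (fun a b c => dA a * G b c + dB a * L b * L c
                       + beta * (W a b * L c + L b * W a c)) i j l
  - cycsum (fun a b c => eta a * G b c) i j l
  = cycsum (fluid_defect (fun a => dB a + bdot * L a - 2 * beta * accel_of W a)
      (fun a => eta a - dA a - bdot * L a)
      (fun a b => 2 * beta * shear_of W a b
                  - (bdot - 2 * beta * expansion_of W) * hproj a b)) i j l.
Proof. by rewrite /cycsum /fluid_defect /shear_of /hproj; field. Qed.

Section Defect.
Variables (p r : 'I_n -> R) (S : 'I_n -> 'I_n -> R).
Hypotheses (Ssym : forall i j, S i j = S j i) (Su0 : forall i, \sum_(l < n) u l * S i l = 0)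
  (up0 : \sum_(l < n) u l * p l = 0).

Let ru := \sum_(l < n) u l * r l.

Lemma fluid_defect_contract_u i j :
  \sum_(l < n) u l * cycsum (fluid_defect p r S) i j l =
  - ((p i + r i) * L j + (p j + r j) * L i + S i j + ru * G i j).
Proof.
rewrite (eq_bigr (fun l => (p i * L j + S i j + p j * L i) * (u l * L l)
  + (- G i j) * (u l * r l) + L i * (u l * S j l) + (- r i) * (u l * G j l)
  + L i * L j * (u l * p l) + L j * (u l * S i l) + (- r j) * (u l * G i l))).
  by rewrite !big_split /= -!mulr_sumr normL !Su0 up0 !sum_u_metric -/ru; ring.
by move=> l _; rewrite /cycsum /fluid_defect (Ssym l i) (metric_sym l i); ring.
Qed.

Lemma fluid_defect_eq0 : (forall i j l, cycsum (fluid_defect p r S) i j l = 0) ->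
  [/\ forall i, p i = 0, forall i, r i = 0 & forall i j, S i j = 0].
Proof.
(* Contracting with u^l, u^j and u^i in turn gives u.r = 0, r = -p and S = 0;
   contracting with g^jl then leaves (n + 1) p = 0. *)
move=> D0.
have E1 i j : (p i + r i) * L j + (p j + r j) * L i + S i j + ru * G i j = 0.
  apply/eqP; rewrite -oppr_eq0 -fluid_defect_contract_u.
  by rewrite big1 // => l _; rewrite D0 mulr0.
have E2 i : p i + r i = 2 * ru * L i.
  have : \sum_(j < n) u j * ((p i + r i) * L j + (p j + r j) * L i + S i j + ru * G i j) = 0.
    by rewrite big1 // => j _; rewrite E1 mulr0.
  rewrite (eq_bigr (fun j => (p i + r i) * (u j * L j) + L i * (u j * p j)
    + L i * (u j * r j) + u j * S i j + ru * (u j * G i j))); last by move=> j _; ring.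
  rewrite !big_split /= -!mulr_sumr normL up0 Su0 sum_u_metric -/ru => h; lra.
have ru0 : ru = 0.
  have : \sum_(i < n) u i * (p i + r i) = \sum_(i < n) (2 * ru) * (u i * L i).
    by apply: eq_bigr => i _; rewrite E2; ring.
  under eq_bigr do rewrite mulrDr.
  rewrite big_split /= -mulr_sumr up0 normL -/ru => h; lra.
have rN i : r i = - p i by have := E2 i; rewrite ru0 => h; lra.
have S0 i j : S i j = 0 by have := E1 i j; rewrite !rN ru0 => h; lra.
have p0 i : p i = 0.
  have : \sum_(j < n) \sum_(l < n) Gi j l * cycsum (fluid_defect p r S) i j l = 0.
    by rewrite big1 // => j _; rewrite big1 // => l _; rewrite D0 mulr0.
  rewrite (eq_bigr (fun j => \sum_(l < n) (p i * (Gi j l * (L j * L l))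
    + L i * (Gi j l * (p j * L l)) + L i * (Gi j l * (L j * p l))
    + Gi j l * (p l * G i j) + p i * (Gi j l * G j l) + Gi j l * (p j * G l i)))); last first.
    by move=> j _; apply: eq_bigr => l _; rewrite /cycsum /fluid_defect !rN !S0; ring.
  under eq_bigr do rewrite !big_split /= -!mulr_sumr.
  rewrite !big_split /= -!mulr_sumr !contract_lower_l contract_lower_r normL up0.
  rewrite contract_metric_l contract_metric_r trace_metric => h.
  have : p i * (n.+1)%:R = 0 by rewrite -h -natr1; ring.
  by move/eqP; rewrite mulf_eq0 pnatr_eq0 orbF => /eqP.
by split=> // i; rewrite rN p0 oppr0.
Qed.

End Defect.
End UnitVector.
End MetricAlgebra.

Section PartialDerivatives.
Variables (R : realType) (n : nat).
Local Notation V := 'rV[R]_n.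

Lemma smooth_derivable (U : set V) (f : V -> R) x v :
  smooth_on U f -> U x -> derivable f x v.
Proof. by move=> sf Ux; apply: diff_derivable; exact: (sf [::] x Ux). Qed.

Lemma pdD (f h : V -> R) i x :
  derivable f x (delta_mx 0 i) -> derivable h x (delta_mx 0 i) ->
  pd i (fun y => f y + h y) x = pd i f x + pd i h x.
Proof. by move=> df dh; rewrite /pd (deriveD df dh). Qed.

Lemma pdM (f h : V -> R) i x :
  derivable f x (delta_mx 0 i) -> derivable h x (delta_mx 0 i) ->
  pd i (fun y => f y * h y) x = f x * pd i h x + h x * pd i f x.
Proof. by move=> df dh; rewrite /pd (deriveM df dh). Qed.

Lemma derivable_sum_ord (F : 'I_n -> V -> R) x v :
  (forall k, derivable (F k) x v) -> derivable (fun y => \sum_(k < n) F k y) x v.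
Proof. by move=> dF; rewrite -fct_sumE; exact: derivable_sum. Qed.

Lemma pd_sum (F : 'I_n -> V -> R) i x :
  (forall k, derivable (F k) x (delta_mx 0 i)) ->
  pd i (fun y => \sum_(k < n) F k y) x = \sum_(k < n) pd i (F k) x.
Proof. by move=> dF; rewrite /pd -fct_sumE derive_sum. Qed.

Lemma pd_near (f h : V -> R) i x : (\forall y \near x, f y = h y) -> pd i f x = pd i h x.
Proof. by move=> fh; apply: near_eq_derive. Qed.

Lemma pd_cst (c : R) i x : pd i (fun _ : V => c) x = 0.
Proof. by rewrite /pd derive_cst. Qed.

End PartialDerivatives.

Section CovariantLeibniz.
Variables (R : realType) (n : nat) (g : 'rV[R]_n -> 'M[R]_n).
Variables (x : 'rV[R]_n) (i j l : 'I_n).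
Local Notation V := 'rV[R]_n.
Local Notation dv f := (derivable f x (delta_mx 0 i)).

Lemma cov2D (T1 T2 : V -> 'I_n -> 'I_n -> R) :
  dv (fun y => T1 y j l) -> dv (fun y => T2 y j l) ->
  cov2 g (fun y a b => T1 y a b + T2 y a b) i j l x =
  cov2 g T1 i j l x + cov2 g T2 i j l x.
Proof.
move=> d1 d2; rewrite /cov2 (pdD d1 d2).
under eq_bigr do rewrite mulrDr.
under [X in _ - X]eq_bigr do rewrite mulrDr.
by rewrite !big_split /=; ring.
Qed.

Lemma cov2_scale (f : V -> R) (T : V -> 'I_n -> 'I_n -> R) :
  dv f -> dv (fun y => T y j l) ->
  cov2 g (fun y a b => f y * T y a b) i j l x =
  pd i f x * T x j l + f x * cov2 g T i j l x.
Proof.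
move=> df dT; rewrite /cov2 (pdM df dT).
under eq_bigr do rewrite mulrCA.
under [X in _ - X]eq_bigr do rewrite mulrCA.
by rewrite -!mulr_sumr; ring.
Qed.

Lemma cov2_tensor (w w' : V -> 'I_n -> R) :
  dv (fun y => w y j) -> dv (fun y => w' y l) ->
  cov2 g (fun y a b => w y a * w' y b) i j l x =
  cov1 g w i j x * w' x l + w x j * cov1 g w' i l x.
Proof.
move=> dw dw'; rewrite /cov2 /cov1 (pdM dw dw').
under eq_bigr do rewrite mulrA mulrC.
under [X in _ - X]eq_bigr do rewrite mulrCA.
by rewrite -!mulr_sumr; ring.
Qed.

End CovariantLeibniz.

Lemma lorentzian_sym (R : realType) (n : nat) (G : 'M[R]_n) : lorentzian G -> G^T = G.
Proof. by case. Qed.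

Lemma lorentzian_unitmx (R : realType) (n : nat) (G : 'M[R]_n) :
  lorentzian G -> G \in unitmx.
Proof.
case=> _ [P [_ hP]]; rewrite unitmxE unitfE.
have : \det (P^T *m G *m P) != 0.
  rewrite hP det_diag; apply/prodf_neq0 => i _.
  by rewrite mxE; case: ifP => _; rewrite ?oppr_eq0 oner_eq0.
by rewrite !det_mulmx det_tr; apply: contraNneq => ->; rewrite mulr0 mul0r.
Qed.

Section LeviCivita.
Variables (R : realType) (n : nat) (U : set 'rV[R]_n) (g : 'rV[R]_n -> 'M[R]_n).
Hypotheses (openU : open U) (smooth_g : forall i j, smooth_on U (fun x => g x i j))
  (lorentzian_g : forall x, U x -> lorentzian (g x)).
Variables (x : 'rV[R]_n) (Ux : U x).

Let trg : (g x)^T = g x := lorentzian_sym (lorentzian_g Ux).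

Lemma trmx_ginv : (ginv g x)^T = ginv g x.
Proof. by rewrite /ginv trmx_inv trg. Qed.

Lemma mulmx_ginv : ginv g x *m g x = 1%:M.
Proof. exact/mulVmx/lorentzian_unitmx/lorentzian_g. Qed.

Lemma derivable_metric i j v : derivable (fun y => g y i j) x v.
Proof. exact: smooth_derivable (smooth_g i j) Ux. Qed.

Lemma near_U : \forall y \near x, U y.
Proof. exact: open_nbhs_nbhs. Qed.

Lemma christoffel_lower i j l : \sum_(k < n) Gam g k i j x * g x k l =
  2^-1 * (pd i (fun y => g y j l) x + pd j (fun y => g y i l) x
          - pd l (fun y => g y i j) x).
Proof.
rewrite /Gam; under eq_bigr do rewrite -mulrA.
by rewrite -mulr_sumr (lower_raise trmx_ginv mulmx_ginv
  (fun m => pd i (fun y => g y j m) x + pd j (fun y => g y i m) x - pd m (fun y => g y i j) x)).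
Qed.

Lemma pd_metric i j l : pd i (fun y => g y j l) x =
  \sum_(k < n) Gam g k i j x * g x k l + \sum_(k < n) Gam g k i l x * g x j k.
Proof.
have g_sym y : U y -> forall a b, g y a b = g y b a.
  by move=> Uy a b; rewrite (metric_sym (lorentzian_sym (lorentzian_g Uy))).
under [X in _ + X]eq_bigr do rewrite (g_sym x Ux j).
rewrite !christoffel_lower.
have -> : pd i (fun y => g y l j) x = pd i (fun y => g y j l) x.
  by apply: pd_near; apply: filterS near_U => y Uy; exact: g_sym.
by field.
Qed.

Lemma cov2_metric i j l : cov2 g (fun y a b => g y a b) i j l x = 0.
Proof. by rewrite /cov2 pd_metric; ring. Qed.

Section UnitTimelike.
Variables (u : 'rV[R]_n -> 'I_n -> R) (A B : 'rV[R]_n -> R).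
Hypotheses (smooth_u : forall i, smooth_on U (fun y => u y i))
  (norm_u : forall y, U y -> \sum_(i < n) \sum_(j < n) g y i j * u y i * u y j = -1)
  (smooth_A : smooth_on U A) (smooth_B : smooth_on U B).

Local Notation L := (lower g u x).
Local Notation W i j := (cov1 g (lower g u) i j x).

Lemma derivable_u i v : derivable (fun y => u y i) x v.
Proof. exact: smooth_derivable (smooth_u i) Ux. Qed.

Lemma derivable_lower j v : derivable (fun y => lower g u y j) x v.
Proof.
apply: derivable_sum_ord => k.
by apply: derivableM; [exact: derivable_metric | exact: derivable_u].
Qed.

Lemma pd_lower i j : pd i (fun y => lower g u y j) x =
  \sum_(k < n) (pd i (fun y => g y j k) x * u x k + g x j k * pd i (fun y => u y k) x).
Proof.
rewrite pd_sum => [|k]; last by apply: derivableM; [exact: derivable_metric | exact: derivable_u].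
apply: eq_bigr => k _.
by rewrite pdM; [ring | exact: derivable_metric | exact: derivable_u].
Qed.

Lemma cov1_lower i j : W i j =
  \sum_(m < n) g x j m * (pd i (fun y => u y m) x + \sum_(k < n) Gam g m i k x * u x k).
Proof.
have cancelling : \sum_(k < n) (\sum_(m < n) Gam g m i j x * g x m k) * u x k =
    \sum_(m < n) Gam g m i j x * L m.
  under eq_bigr do rewrite mulr_suml.
  rewrite exchange_big /=; apply: eq_bigr => m _.
  by rewrite /lower mulr_sumr; apply: eq_bigr => k _; ring.
have connection : \sum_(k < n) (\sum_(m < n) Gam g m i k x * g x j m) * u x k =
    \sum_(m < n) g x j m * \sum_(k < n) Gam g m i k x * u x k.
  under eq_bigr do rewrite mulr_suml.
  rewrite exchange_big /=; apply: eq_bigr => m _.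
  by rewrite mulr_sumr; apply: eq_bigr => k _; ring.
rewrite /cov1 pd_lower; under eq_bigr do rewrite pd_metric mulrDl.
under [RHS]eq_bigr do rewrite mulrDr.
by rewrite !big_split /= cancelling connection; ring.
Qed.

Lemma sum_u_lower y : U y -> \sum_(j < n) u y j * lower g u y j = -1.
Proof.
move=> Uy; rewrite -(norm_u Uy); apply: eq_bigr => j _.
by rewrite /lower mulr_sumr; apply: eq_bigr => k _; ring.
Qed.

Lemma cov1_lower_u i : \sum_(j < n) u x j * W i j = 0.
Proof.
(* By [cov1_lower], u^j ∇_i u_j is both u^j ∂_i u_j - Γ(u, u) and u_m ∂_i u^m + Γ(u, u);
   the sum of the two is ∂_i (u^j u_j) = 0. *)
have pd_norm : \sum_(j < n) u x j * pd i (fun y => lower g u y j) x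
    + \sum_(m < n) L m * pd i (fun y => u y m) x = 0.
  have : pd i (fun y => \sum_(j < n) u y j * lower g u y j) x = 0.
    rewrite (@pd_near _ _ _ (fun=> -1)) ?pd_cst //.
    by apply: filterS near_U => y; exact: sum_u_lower.
  rewrite pd_sum => [dsum|j]; last by apply: derivableM; [exact: derivable_u | exact: derivable_lower].
  rewrite -[RHS]dsum -big_split /=; apply: eq_bigr => j _.
  by rewrite pdM; [ring | exact: derivable_u | exact: derivable_lower].
have via_raised : \sum_(j < n) u x j * W i j = \sum_(m < n) L m * pd i (fun y => u y m) x
    + \sum_(m < n) \sum_(k < n) Gam g m i k x * u x k * L m.
  under eq_bigr do rewrite cov1_lower mulr_sumr.
  rewrite exchange_big /= -big_split /=; apply: eq_bigr => m _.
  have Lm : \sum_(j < n) u x j * g x j m = L m.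
    by apply: eq_bigr => j _; rewrite (metric_sym trg j m) mulrC.
  rewrite (eq_bigr (fun j => u x j * g x j m * (pd i (fun y => u y m) x
    + \sum_(k < n) Gam g m i k x * u x k))); last by move=> j _; ring.
  by rewrite -!mulr_suml Lm; ring.
have via_lowered : \sum_(j < n) u x j * W i j =
    \sum_(j < n) u x j * pd i (fun y => lower g u y j) x
    - \sum_(j < n) \sum_(k < n) Gam g k i j x * u x j * L k.
  rewrite -sumrB; apply: eq_bigr => j _.
  by rewrite /cov1 mulrBr mulr_sumr; congr (_ - _); apply: eq_bigr => k _; ring.
rewrite exchange_big /= in via_lowered.
lra.
Qed.

Let lowerE j : L j = \sum_(k < n) g x j k * u x k := erefl.
Let normL : \sum_(j < n) u x j * L j = -1 := sum_u_lower Ux.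

Let accelE : accel g u x = accel_of (u x) (fun a b => W a b) := erefl.
Let expansionE : expansion g u x = expansion_of (ginv g x) (fun a b => W a b) := erefl.
Let shearE : shear g u x = shear_of (g x) (ginv g x) (u x) L (fun a b => W a b) := erefl.

Lemma cov2_perfect_fluid i j l : cov2 g (perfect_fluid g u A B) i j l x =
  pd i A x * g x j l + pd i B x * L j * L l + B x * (W i j * L l + L j * W i l).
Proof.
have dA v : derivable A x v by exact: smooth_derivable smooth_A Ux.
have dB v : derivable B x v by exact: smooth_derivable smooth_B Ux.
have dLL v : derivable (fun y => lower g u y j * lower g u y l) x v.
  by apply: derivableM; exact: derivable_lower.
have -> : perfect_fluid g u A B =
    fun y a b => A y * g y a b + B y * (lower g u y a * lower g u y b).
  by apply/funext => y; apply/funext => a; apply/funext => b; rewrite /perfect_fluid mulrA.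
rewrite cov2D; [| by cbv beta; apply: derivableM => //; exact: derivable_metric
               | by cbv beta; apply: derivableM].
rewrite cov2_scale ?cov2_metric; [|done | exact: derivable_metric].
rewrite cov2_scale ?cov2_tensor //; try exact: derivable_lower.
ring.
Qed.

Variable eta : 'rV[R]_n -> 'I_n -> R.

Let p a := pd a B x + dotf u B x * L a - 2 * B x * accel g u x a.
Let r a := eta x a - pd a A x - dotf u B x * L a.
Let e := dotf u B x - 2 * B x * expansion g u x.
Let S a b := 2 * B x * shear g u x a b - e * hproj (g x) L a b.

Lemma perfect_fluid_defect i j l :
  cycsum (fun a b c => cov2 g (perfect_fluid g u A B) a b c x) i j l
  - cycsum (fun a b c => eta x a * g x b c) i j l
  = cycsum (fluid_defect (g x) L p r S) i j l.
Proof.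
rewrite /p /r /S /e accelE expansionE shearE -fluid_ckt_defectE.
by rewrite /cycsum !cov2_perfect_fluid.
Qed.

Hypotheses (n_gt1 : (1 < n)%N) (Bx_neq0 : B x != 0).

Lemma perfect_fluid_CKT_at :
  (forall i j l, cycsum (fun a b c => cov2 g (perfect_fluid g u A B) a b c x) i j l
                 = cycsum (fun a b c => eta x a * g x b c) i j l) <->
  [/\ forall i j, shear g u x i j = 0, expansion g u x = dotf u B x / (2 * B x),
      forall j, pd j B x = - dotf u B x * L j + 2 * B x * accel g u x j
    & forall j, eta x j = pd j A x + dotf u B x * L j].
Proof.
have -> : (forall i j l, cycsum (fun a b c => cov2 g (perfect_fluid g u A B) a b c x) i j l
                 = cycsum (fun a b c => eta x a * g x b c) i j l) <->
          (forall i j l, cycsum (fluid_defect (g x) L p r S) i j l = 0).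
  split=> h i j l; move: (perfect_fluid_defect i j l); first by rewrite h subrr.
  by rewrite h => /eqP; rewrite subr_eq0 => /eqP.
have S_sym a b : S a b = S b a.
  by rewrite /S shearE (shear_of_sym _ trg) (hproj_sym trg L a b).
have S_u a : \sum_(b < n) u x b * S a b = 0.
  rewrite (eq_bigr (fun b => 2 * B x * (u x b * shear g u x a b)
    + (- e) * (u x b * hproj (g x) L a b))); last by move=> b _; rewrite /S; ring.
  by rewrite big_split /= -!mulr_sumr shearE (shear_of_u _ lowerE normL cov1_lower_u)
    (hproj_u lowerE normL); ring.
have p_u : \sum_(a < n) u x a * p a = 0.
  rewrite (eq_bigr (fun a => u x a * pd a B x + dotf u B x * (u x a * L a)
    + (- (2 * B x)) * (u x a * accel g u x a))); last by move=> a _; rewrite /p; ring.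
  by rewrite !big_split /= -!mulr_sumr normL accelE (accel_of_u cov1_lower_u) -/(dotf u B x); ring.
have B2_neq0 : 2 * B x != 0 by rewrite mulf_neq0 ?pnatr_eq0.
split.
  move=> /(fluid_defect_eq0 trg trmx_ginv mulmx_ginv lowerE normL S_sym S_u p_u).
  move=> [p0 r0 S0].
  have [e0 shear0] : e = 0 /\ forall a b, shear g u x a b = 0.
    apply: (tracefree_eq_hproj trg mulmx_ginv lowerE normL n_gt1 B2_neq0).
      by rewrite shearE (shear_of_tracefree trg trmx_ginv mulmx_ginv lowerE normL cov1_lower_u).
    by move=> a b; apply/eqP; rewrite -subr_eq0 -/(S a b) S0.
  split=> // [|a|a].
  - by move: e0; rewrite /e => /eqP; rewrite subr_eq0 => /eqP ->; field.
  - by move: (p0 a); rewrite /p => pa; lra.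
  - by move: (r0 a); rewrite /r => ra; lra.
case=> shear0 H0 dB0 eta0 i j l.
have p0 a : p a = 0 by rewrite /p dB0; ring.
have r0 a : r a = 0 by rewrite /r eta0; ring.
have S0 a b : S a b = 0 by rewrite /S /e shear0 H0; field.
by rewrite /cycsum /fluid_defect !p0 !r0 !S0; ring.
Qed.

End UnitTimelike.

End LeviCivita.

Unset Implicit Arguments.

Theorem theorem1 (R : realType) (n : nat) (U : set 'rV[R]_n)
  (g : 'rV[R]_n -> 'M[R]_n) (u : 'rV[R]_n -> 'I_n -> R)
  (A B : 'rV[R]_n -> R) :
  (2 <= n)%N -> open U ->
  (forall i j : 'I_n, smooth_on U (fun x => g x i j)) ->
  (forall x, U x -> lorentzian (g x)) ->
  (forall i : 'I_n, smooth_on U (fun x => u x i)) ->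
  (forall x, U x -> \sum_(i < n) \sum_(j < n) g x i j * u x i * u x j = -1) ->
  smooth_on U A -> smooth_on U B ->
  (forall x, U x -> B x != 0) ->
  (is_CKT g U (perfect_fluid g u A B) <->
     shear_free g u U /\ cond2 g u U B) /\
  (shear_free g u U /\ cond2 g u U B ->
     forall eta : 'rV[R]_n -> 'I_n -> R,
       CKT_eq g U (perfect_fluid g u A B) eta <->
       (forall x, U x -> forall j : 'I_n,
          eta x j = pd j A x + dotf u B x * lower g u x j)).
Proof.
move=> n_gt1 openU smooth_g lorentzian_g smooth_u norm_u smooth_A smooth_B B_neq0.
have CKT_at x (Ux : U x) eta := perfect_fluid_CKT_at openU smooth_g lorentzian_g Ux
  smooth_u norm_u smooth_A smooth_B eta n_gt1 (B_neq0 x Ux).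
split; first split.
- case=> eta CKT; split=> x Ux; have [shear0 H0 dB0 _] := (CKT_at x Ux eta).1 (CKT x Ux).
    exact: shear0.
  by split.
- case=> shear0 cond; pose eta x j := pd j A x + dotf u B x * lower g u x j.
  exists eta => x Ux; have [H0 dB0] := cond x Ux.
  by apply/(CKT_at x Ux eta).2; split=> //; exact: shear0.
case=> shear0 cond eta; split=> [CKT x Ux | eta0 x Ux].
  by have [_ _ _ eta0] := (CKT_at x Ux eta).1 (CKT x Ux).
by have [H0 dB0] := cond x Ux; apply/(CKT_at x Ux eta).2; split=> //; [exact: shear0 | exact: eta0].
Qed.
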